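(* Let $n\ge 1$ be an integer and let $\mathbf F_{\mathcal V_n}(1)$ be the free algebra on one generator in the variety $\mathcal V_n$ generated by $\mathbf J_n$. Then $$|F_{\mathcal V_n}(1)|=\tfrac12\big(n^6+10n^5+42n^4+102n^3+157n^2+148n+72\big).$$
   Context: For $n\ge1$, $\mathbf J_n=\langle J_n;\otimes,\oplus,\wedge,\vee,\neg,\top,\mathbf f_0,\dots,\mathbf f_n,\mathbf t_0,\dots,\mathbf t_n,\bot\rangle$ where $J_n=\{\top,\mathbf f_0,\dots,\mathbf f_n,\mathbf t_0,\dots,\mathbf t_n,\bot\}$ ($2n+4$ elements). The knowledge order $\le_k$ on $J_n$ consists of the two chains $\bot<\mathbf f_n<\mathbf f_{n-1}<\dots<\mathbf f_0<\top$ and $\bot<\mathbf t_n<\dots<\mathbf t_0<\top$ (with $\mathbf f_i,\mathbf t_j$ incomparable). The truth order $\le_t$ is generated by $\mathbf f_0<\mathbf f_1<\dots<\mathbf f_n<\top<\mathbf t_n<\dots<\mathbf t_1<\mathbf t_0$ and $\mathbf f_n<\bot<\mathbf t_n$ ($\top,\bot$ incomparable). $\otimes,\oplus$ are meet and join for $\le_k$, $\wedge,\vee$ are meet and join for $\le_t$, $\neg\top=\top$, $\neg\bot=\bot$, $\neg\mathbf f_m=\mathbf t_m$, $\neg\mathbf t_m=\mathbf f_m$, and every element is a nullary operation (constant) naming itself. $\mathcal V_n$ is the variety generated by $\mathbf J_n$. *)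

From HB Require Import structures.
From mathcomp Require Import all_boot all_order.
Set Implicit Arguments. Unset Strict Implicit. Unset Printing Implicit Defensive.

Inductive jel (n : nat) : Type :=
  | JTop | JBot | JF of 'I_n.+1 | JT of 'I_n.+1.
Arguments JTop {n}. Arguments JBot {n}.

Definition jel_code n (x : jel n) : option (option (bool * 'I_n.+1)) :=
  match x with
  | JTop => None | JBot => Some None
  | JF i => Some (Some (false, i)) | JT i => Some (Some (true, i)) end.
Definition jel_decode n (c : option (option (bool * 'I_n.+1))) : jel n :=
  match c with
  | None => JTop | Some None => JBot
  | Some (Some (false, i)) => JF i | Some (Some (true, i)) => JT i end.
Lemma jel_codeK n : cancel (@jel_code n) (@jel_decode n).
Proof. by case. Qed.
HB.instance Definition _ n := Equality.copy (jel n) (can_type (@jel_codeK n)).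
HB.instance Definition _ n := Choice.copy (jel n) (can_type (@jel_codeK n)).
HB.instance Definition _ n := Countable.copy (jel n) (can_type (@jel_codeK n)).
HB.instance Definition _ n := Finite.copy (jel n) (can_type (@jel_codeK n)).

Section Ops.
Variable n : nat.
Implicit Types x y : jel n.

Definition le_k x y : bool :=
  match x, y with
  | JBot, _ => true
  | _, JTop => true
  | JF i, JF j => (j <= i)%N
  | JT i, JT j => (j <= i)%N
  | _, _ => false
  end.

(* Truth order <=_t : f_0 < ... < f_n < top < t_n < ... < t_0 and
   f_n < bot < t_n (top, bot incomparable). *)
Definition lvl x : nat :=
  match x with
  | JF i => i | JTop => n.+1 | JBot => n.+1 | JT i => (n.*2.+2 - i)%N end.
Definition le_t x y : bool := (x == y) || (lvl x < lvl y)%N.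

(* otimes / oplus : meet / join for <=_k *)
Definition jotimes x y : jel n :=
  match x, y with
  | JTop, _ => y
  | _, JTop => x
  | JF i, JF j => JF (if (i <= j)%N then j else i)
  | JT i, JT j => JT (if (i <= j)%N then j else i)
  | _, _ => JBot
  end.
Definition joplus x y : jel n :=
  match x, y with
  | JBot, _ => y
  | _, JBot => x
  | JF i, JF j => JF (if (i <= j)%N then i else j)
  | JT i, JT j => JT (if (i <= j)%N then i else j)
  | _, _ => JTop
  end.

(* wedge / vee : meet / join for <=_t.  Two distinct elements of the same
   level are exactly top and bot, whose meet is f_n and join is t_n. *)
Definition jwedge x y : jel n :=
  if (lvl x < lvl y)%N then x else if (lvl y < lvl x)%N then y
  else if x == y then x else JF ord_max.
Definition jvee x y : jel n :=
  if (lvl x < lvl y)%N then y else if (lvl y < lvl x)%N then x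
  else if x == y then x else JT ord_max.

Definition jneg x : jel n :=
  match x with JTop => JTop | JBot => JBot | JF i => JT i | JT i => JF i end.

Inductive term : Type :=
  | TVar
  | TConst of jel n
  | TOtimes of term & term
  | TOplus of term & term
  | TWedge of term & term
  | TVee of term & term
  | TNeg of term.

Fixpoint teval (t : term) (a : jel n) : jel n :=
  match t with
  | TVar => a
  | TConst c => c
  | TOtimes t1 t2 => jotimes (teval t1 a) (teval t2 a)
  | TOplus t1 t2 => joplus (teval t1 a) (teval t2 a)
  | TWedge t1 t2 => jwedge (teval t1 a) (teval t2 a)
  | TVee t1 t2 => jvee (teval t1 a) (teval t2 a)
  | TNeg t1 => jneg (teval t1 a)
  end.

(* The universe of the free algebra F_{V_n}(1), realised (Birkhoff) as the
   set of unary term operations of J_n. *)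
Definition free1 (f : {ffun jel n -> jel n}) : Prop :=
  exists t : term, forall a, teval t a = f a.

End Ops.

From mathcomp Require Import all_boot all_order zify.
Set Implicit Arguments. Unset Strict Implicit. Unset Printing Implicit Defensive.

(* By Birkhoff, F_{V_n}(1) is the algebra of unary term operations of J_n.
   Term operations preserve the compatible relations [kind_le] (comparing
   the four kinds bot < f_i, t_j < top) and [chain_rel i j].  Conversely an
   operation preserving them agrees on any two points with some term, and
   since J_n has a majority term (that of the lattice <=_t), the
   Baker-Pixley argument yields a single term agreeing with it everywhere.
   Such an operation is determined by its values u, v at bot, top and by
   the end points of its restriction to each of the two chains, which can
   be chosen independently; hence the free algebra has
   sum_{u,v} c(u,v)^2 elements, where c(u,v) counts the admissible end
   points of one chain, and this sum is the stated polynomial. *)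

Section MajorityInterpolation.
Variables (A : eqType) (T : Type) (ev : T -> A -> A).
Variables (maj : A -> A -> A -> A) (tmaj : T -> T -> T -> T).
Hypothesis ev_tmaj :
  forall t1 t2 t3 a, ev (tmaj t1 t2 t3) a = maj (ev t1 a) (ev t2 a) (ev t3 a).
Hypotheses (majxxy : forall x y, maj x x y = x) (majxyx : forall x y, maj x y x = x)
  (majyxx : forall x y, maj y x x = x).

Lemma majority_interpolation (f : A -> A) :
  (forall a b, exists t, ev t a = f a /\ ev t b = f b) ->
  forall a b s, exists t, {in [:: a, b & s], ev t =1 f}.
Proof.
move=> pairs a b s; elim: s a b => [|c s IH] a b.
  by have [t [ta tb]] := pairs a b; exists t => x; rewrite !inE => /orP[] /eqP ->.
have [t1 H1] := IH b c; have [t2 H2] := IH a c; have [t3 H3] := IH a b.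
(* Any two of [t1], [t2], [t3] agree with [f] at each point of the list. *)
exists (tmaj t1 t2 t3) => x; rewrite ev_tmaj !inE.
case/or4P=> [/eqP-> | /eqP-> | /eqP-> | xs].
- by rewrite (H2 a) ?(H3 a) ?inE ?eqxx.
- by rewrite (H1 b) ?(H3 b) ?inE ?eqxx ?orbT.
- by rewrite (H1 c) ?(H2 c) ?inE ?eqxx ?orbT.
- by rewrite (H1 x) ?(H2 x) ?(H3 x) ?inE ?xs ?orbT.
Qed.

End MajorityInterpolation.

Lemma sum_option (T : finType) (F : option T -> nat) :
  \sum_(o : option T) F o = F None + \sum_(x : T) F (Some x).
Proof.
have -> : index_enum (option T) = None :: map Some (index_enum T).
  by rewrite [index_enum (option T)]unlock Finite.enum.unlock [index_enum T]unlock.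
by rewrite big_cons big_map.
Qed.

Lemma sum_pair (I J : finType) (F : I * J -> nat) :
  \sum_(p : I * J) F p = \sum_(i : I) \sum_(j : J) F (i, j).
Proof. by rewrite pair_bigA; apply: eq_bigr => -[]. Qed.

Lemma sum_ord_geq N a : \sum_(j < N) (a <= j) = N - a.
Proof.
elim: N => [|N IH]; first by rewrite big_ord0.
by rewrite big_ord_recr /= IH; case: leqP => /= h; lia.
Qed.

Lemma sum_ord_subn N : 2 * \sum_(i < N) (N - i) = N * N.+1.
Proof.
elim: N => [|N IH]; first by rewrite big_ord0.
rewrite big_ord_recl subn0 (eq_bigr (fun i : 'I_N => N - i)) => [|i _].
  by rewrite mulnDr IH; lia.
by rewrite lift0.
Qed.

Arguments TVar {n}.

Section Relations.
Variable n : nat.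
Implicit Types (x y u v : jel n) (i j : 'I_n.+1).

Definition kind_le x y : bool :=
  match x, y with
  | JBot, _ | _, JTop | JF _, JF _ | JT _, JT _ => true
  | _, _ => false
  end.

Lemma kind_le_refl : reflexive kind_le.
Proof. by case. Qed.

Lemma kind_le_trans : transitive kind_le.
Proof. by case=> [||?|?] [||?|?] [||?|?]. Qed.

Definition chain_rel (i j : nat) x y : bool :=
  match x, y with
  | JTop, JTop | JBot, JBot => true
  | JF a, JF b | JT a, JT b => (a == b :> nat) || [&& i <= a, a < b & b <= j]
  | _, _ => false
  end.

Lemma eq_JF i j : (JF i == JF j :> jel n) = (i == j :> nat). Proof. by []. Qed.
Lemma eq_JT i j : (JT i == JT j :> jel n) = (i == j :> nat). Proof. by []. Qed.

End Relations.

Ltac jel_brute :=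
  repeat match goal with o : 'I_ _ |- _ => destruct o as [o ?] end;
  rewrite /= /jwedge /jvee /=;
  repeat (rewrite ?eq_JF ?eq_JT /=; match goal with
    | |- context[if ?c then _ else _] =>
        lazymatch c with context[if _ then _ else _] => fail | _ =>
          let E := fresh "E" in case E: c end
    end);
  simpl in *; try done; try lia;
  try ((congr JF || congr JT); apply: val_inj => /=; lia).

Section Compatibility.
Variable n : nat.
Implicit Types (x y : jel n) (f : jel n -> jel n) (R : rel (jel n)).

Definition op_compatible R (op : jel n -> jel n -> jel n) :=
  forall x x' y y', R x x' -> R y y' -> R (op x y) (op x' y').

Definition compatible R :=
  [/\ reflexive R, {homo @jneg n : x y / R x y},
      op_compatible R (@jotimes n) /\ op_compatible R (@joplus n) &
      op_compatible R (@jwedge n) /\ op_compatible R (@jvee n)].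

Lemma teval_compatible R t x y : compatible R -> R x y -> R (teval t x) (teval t y).
Proof.
case=> Rrefl Rneg [Rotimes Roplus] [Rwedge Rvee] Rxy.
by elim: t => //= [t1 IH1 t2 IH2|t1 IH1 t2 IH2|t1 IH1 t2 IH2|t1 IH1 t2 IH2|t1 IH1]; auto.
Qed.

Lemma chain_rel_compatible (i j : nat) : compatible (chain_rel i j).
Proof.
split; [by case=> //= a; rewrite eqxx | by case=> [||a|a] [||b|b] | split | split];
  move=> [||a|a] [||a'|a'] [||b|b] [||b'|b'] //=; jel_brute.
Qed.

Lemma kind_le_compatible : compatible (@kind_le n).
Proof.
split; [by case | by case=> [||a|a] [||b|b] | split | split];
  move=> [||a|a] [||a'|a'] [||b|b] [||b'|b'] //=; jel_brute.
Qed.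

Definition admissible f : Prop :=
  (forall x, kind_le (f JBot) (f x) /\ kind_le (f x) (f JTop)) /\
  (forall i j : 'I_n.+1, i <= j ->
     chain_rel i j (f (JF i)) (f (JF j)) /\ chain_rel i j (f (JT i)) (f (JT j))).

Lemma chain_rel_indices (i j : 'I_n.+1) : i <= j ->
  chain_rel i j (JF i) (JF j) /\ chain_rel i j (JT i) (JT j).
Proof. by move=> le_ij /=; split; lia. Qed.

Lemma term_admissible (t : term n) : admissible (teval t).
Proof.
split=> [x | i j le_ij].
- by split; apply: teval_compatible kind_le_compatible _; case: x.
- have [F_ij T_ij] := chain_rel_indices le_ij.
  by split; apply: teval_compatible (chain_rel_compatible i j) _.
Qed.

End Compatibility.

Section Reachable.
Variable n : nat.
Implicit Types (a b c u v x : jel n) (f : jel n -> jel n) (t s : term n).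

Fixpoint tsubst t s : term n :=
  match t with
  | TVar => s
  | TConst c => TConst c
  | TOtimes t1 t2 => TOtimes (tsubst t1 s) (tsubst t2 s)
  | TOplus t1 t2 => TOplus (tsubst t1 s) (tsubst t2 s)
  | TWedge t1 t2 => TWedge (tsubst t1 s) (tsubst t2 s)
  | TVee t1 t2 => TVee (tsubst t1 s) (tsubst t2 s)
  | TNeg t1 => TNeg (tsubst t1 s)
  end.

Lemma teval_subst t s a : teval (tsubst t s) a = teval t (teval s a).
Proof. by elim: t => //= [t1 -> t2 ->|t1 -> t2 ->|t1 -> t2 ->|t1 -> t2 ->|t1 ->]. Qed.

(* [(u, v)] lies in the subalgebra of [J_n ^ 2] generated by [(a, b)]. *)
Definition reachable a b u v := exists t : term n, teval t a = u /\ teval t b = v.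

Lemma reachable_const a b c : reachable a b c c.
Proof. by exists (TConst c). Qed.

Lemma reachable_sym a b u v : reachable a b u v -> reachable b a v u.
Proof. by case=> t [] <- <-; exists t. Qed.

Lemma reachable_trans a b u v u' v' :
  reachable a b u v -> reachable u v u' v' -> reachable a b u' v'.
Proof.
case=> s [su sv] [t [tu tv]]; exists (tsubst t s).
by rewrite !teval_subst su sv.
Qed.

Lemma reachable_neg a b : reachable a b (jneg a) (jneg b).
Proof. by exists (TNeg TVar). Qed.

Lemma reachable_bot_top_F (c d : 'I_n.+1) : reachable JBot JTop (JF c) (JF d).
Proof.
case: (leqP c d) => cd.
- by exists (TWedge (TOplus TVar (TConst (JF c))) (TConst (JF d))); split; jel_brute.
- by exists (TOplus (TOtimes TVar (TConst (JF d))) (TConst (JF c))); split; jel_brute.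
Qed.

Lemma reachable_bot_top u v : kind_le u v -> reachable JBot JTop u v.
Proof.
case: u => [||c|c]; case: v => [||d|d] //= _; try exact: reachable_const.
- by exists TVar.
- by exists (TOtimes TVar (TConst (JF d))).
- by exists (TOtimes TVar (TConst (JT d))).
- by exists (TOplus TVar (TConst (JF c))).
- exact: reachable_bot_top_F.
- by exists (TOplus TVar (TConst (JT c))).
- exact: reachable_trans (reachable_bot_top_F c d) (reachable_neg _ _).
Qed.

Definition chain_elem x := if x is (JF _ | JT _) then true else false.

Lemma reachable_bot_chain x : chain_elem x -> reachable JBot x JBot JTop.
Proof. by case: x => // i _; exists (TOplus TVar (TNeg TVar)). Qed.

Lemma reachable_top_chain x : chain_elem x -> reachable JTop x JTop JBot.
Proof. by case: x => // i _; exists (TOtimes TVar (TNeg TVar)). Qed.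

Lemma reachable_F_T (i j : 'I_n.+1) u v : reachable (JF i) (JT j) u v.
Proof.
pose s : term n := TOplus TVar (TConst (JT ord0)).
(* [p] sends every [f_k] to [top] and every [t_k] to [bot]; [q] does the converse. *)
pose p := TOtimes s (TNeg s).
pose q := tsubst p (TNeg TVar).
exists (TOplus (TOtimes p (TConst u)) (TOtimes q (TConst v))).
by rewrite /=; split; case: u; case: v.
Qed.

Lemma reachable_F_chain (i j : 'I_n.+1) u v :
  chain_rel i j u v -> reachable (JF i) (JF j) u v.
Proof.
have chain_F (c d : 'I_n.+1) :
    chain_rel i j (JF c) (JF d) -> reachable (JF i) (JF j) (JF c) (JF d).
  move=> cd; exists (TOplus (TOtimes TVar (TConst (JF c))) (TConst (JF d))).
  by split; jel_brute.
case: u v => [||c|c] [||d|d] //= cd; try exact: reachable_const.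
- exact: chain_F.
- exact: reachable_trans (chain_F c d cd) (reachable_neg _ _).
Qed.

Lemma reachable_T_chain (i j : 'I_n.+1) u v :
  chain_rel i j u v -> reachable (JT i) (JT j) u v.
Proof. by move=> /reachable_F_chain; apply: reachable_trans (reachable_neg (JT i) (JT j)). Qed.

Lemma admissible_reachable f : admissible f -> forall a b, reachable a b (f a) (f b).
Proof.
case=> fK fC.
have bot_top := reachable_bot_top (kind_le_trans (fK JTop).1 (fK JTop).2).
have bot_x x : chain_elem x -> reachable JBot x (f JBot) (f x).
  move=> x_chain; apply: reachable_trans (reachable_bot_chain x_chain) _.
  exact/reachable_bot_top/(fK x).1.
have top_x x : chain_elem x -> reachable JTop x (f JTop) (f x).
  move=> x_chain; apply: reachable_trans (reachable_top_chain x_chain) _.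
  exact/reachable_sym/reachable_bot_top/(fK x).2.
have chain_F i j : reachable (JF i) (JF j) (f (JF i)) (f (JF j)).
  wlog le_ij : i j / i <= j by case: (leqP i j) => [|/ltnW] /[swap] H /H // /reachable_sym.
  exact/reachable_F_chain/(fC i j le_ij).1.
have chain_T i j : reachable (JT i) (JT j) (f (JT i)) (f (JT j)).
  wlog le_ij : i j / i <= j by case: (leqP i j) => [|/ltnW] /[swap] H /H // /reachable_sym.
  exact/reachable_T_chain/(fC i j le_ij).2.
case=> [||i|i] [||j|j]; try exact: reachable_const;
  auto using reachable_F_T; apply/reachable_sym; auto using reachable_F_T.
Qed.

End Reachable.

Section FreeAlgebra.
Variable n : nat.
Implicit Types x y z : jel n.

Lemma jwedgexx x : jwedge x x = x.
Proof. by rewrite /jwedge ltnn eqxx. Qed.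
Lemma jveexx x : jvee x x = x.
Proof. by rewrite /jvee ltnn eqxx. Qed.
Lemma jwedgeC x y : jwedge x y = jwedge y x.
Proof. by case: x => [||a|a]; case: y => [||b|b]; jel_brute. Qed.
Lemma jveeC x y : jvee x y = jvee y x.
Proof. by case: x => [||a|a]; case: y => [||b|b]; jel_brute. Qed.
Lemma jveeKwedge x y : jvee x (jwedge x y) = x.
Proof. by case: x => [||a|a]; case: y => [||b|b]; jel_brute. Qed.

Definition jmaj x y z := jvee (jwedge x y) (jvee (jwedge y z) (jwedge x z)).

Lemma jmaj_xxy x y : jmaj x x y = x.
Proof. by rewrite /jmaj jwedgexx jveexx jveeKwedge. Qed.
Lemma jmaj_xyx x y : jmaj x y x = x.
Proof. by rewrite /jmaj jwedgexx (jwedgeC y) (jveeC _ x) jveeKwedge jveeC jveeKwedge. Qed.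
Lemma jmaj_yxx x y : jmaj y x x = x.
Proof. by rewrite /jmaj jwedgexx (jwedgeC y) jveeKwedge jveeC jveeKwedge. Qed.

Definition tmaj (t1 t2 t3 : term n) :=
  TVee (TWedge t1 t2) (TVee (TWedge t2 t3) (TWedge t1 t3)).

Lemma teval_tmaj t1 t2 t3 x :
  teval (tmaj t1 t2 t3) x = jmaj (teval t1 x) (teval t2 x) (teval t3 x).
Proof. by []. Qed.

Lemma free1_admissible (f : {ffun jel n -> jel n}) : free1 f <-> admissible f.
Proof.
split=> [[t tf] | f_adm].
  have [tK tC] := term_admissible t.
  by split=> [x | i j ij]; rewrite -!tf; [apply: tK | apply: tC].
have [t tf] := majority_interpolation teval_tmaj jmaj_xxy jmaj_xyx jmaj_yxx
  (admissible_reachable f_adm) JTop JTop (enum {: jel n}).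
by exists t => x; apply: tf; rewrite !in_cons mem_enum !orbT.
Qed.

End FreeAlgebra.

Section Profiles.
Variable n : nat.
Implicit Types (x y z u v : jel n) (i j : 'I_n.+1).

Definition clamp (a b i : 'I_n.+1) : 'I_n.+1 := inord (minn (maxn i a) b).

Lemma clampE a b i : clamp a b i = minn (maxn i a) b :> nat.
Proof. by rewrite inordK // ltnS geq_min leq_ord orbT. Qed.

(* The value at index [i] forced on an admissible operation that sends index 0
   to [x] and index [n] to [y]. *)
Definition chain_at x y i : jel n :=
  match x, y with
  | JF a, JF b => JF (clamp a b i)
  | JT a, JT b => JT (clamp a b i)
  | _, _ => x
  end.

Lemma chain_at_eq x y z i :
  chain_rel 0 i x z -> chain_rel i n z y -> z = chain_at x y i.
Proof.
case: x y z => [||a|a] [||b|b] [||c|c] //= xz zy; congr (_ _); apply: val_inj;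
  rewrite /= clampE; move: (ltn_ord a) (ltn_ord b) (ltn_ord c) (ltn_ord i); lia.
Qed.

Lemma chain_at_ends x y :
  chain_rel 0 n x y -> chain_at x y ord0 = x /\ chain_at x y ord_max = y.
Proof.
case: x y => [||a|a] [||b|b] //= xy; split=> //; congr (_ _); apply: val_inj;
  rewrite /= clampE /=; move: (ltn_ord a) (ltn_ord b); lia.
Qed.

Lemma chain_at_rel x y i j : chain_rel 0 n x y -> i <= j ->
  chain_rel i j (chain_at x y i) (chain_at x y j).
Proof.
case: x y => [||a|a] [||b|b] //= xy ij; rewrite !clampE;
  move: (ltn_ord a) (ltn_ord b) (ltn_ord i) (ltn_ord j); lia.
Qed.

Lemma kind_le_chain_atr x y z i : kind_le z (chain_at x y i) = kind_le z x.
Proof. by case: x y z => [||a|a] [||b|b] [||c|c]. Qed.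

Lemma kind_le_chain_atl x y z i : kind_le (chain_at x y i) z = kind_le x z.
Proof. by case: x y z => [||a|a] [||b|b] [||c|c]. Qed.

Definition profile := ((jel n * jel n) * (jel n * jel n) * (jel n * jel n))%type.

Definition profile_of (f : jel n -> jel n) : profile :=
  ((f JBot, f JTop), (f (JF ord0), f (JF ord_max)), (f (JT ord0), f (JT ord_max))).

Definition of_profile (w : profile) : {ffun jel n -> jel n} :=
  let: ((u, v), (p0, pn), (q0, qn)) := w in
  [ffun x => match x with
    | JBot => u | JTop => v | JF i => chain_at p0 pn i | JT i => chain_at q0 qn i
    end].

Definition chain_ok (uv p : jel n * jel n) : bool :=
  [&& kind_le uv.1 p.1, kind_le p.1 uv.2 & chain_rel 0 n p.1 p.2].

Definition profile_ok (w : profile) : bool :=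
  chain_ok w.1.1 w.1.2 && chain_ok w.1.1 w.2.

Lemma admissible_profile (f : {ffun jel n -> jel n}) :
  admissible f -> profile_ok (profile_of f) /\ of_profile (profile_of f) = f.
Proof.
case=> fK fC; have [fK0 fKn] := (fK (JF ord0), fK (JT ord0)).
have [fCF fCT] := fC ord0 ord_max (leq0n _).
split; first by rewrite /profile_ok /chain_ok /= fK0.1 fK0.2 fKn.1 fKn.2 fCF fCT.
apply/ffunP=> -[||i|i]; rewrite ffunE //; apply/esym/chain_at_eq.
- exact: (fC ord0 i (leq0n _)).1.
- exact: (fC i ord_max (leq_ord i)).1.
- exact: (fC ord0 i (leq0n _)).2.
- exact: (fC i ord_max (leq_ord i)).2.
Qed.

Lemma profile_of_profile w : profile_ok w -> profile_of (of_profile w) = w.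
Proof.
case: w => [[[u v] [p0 pn]] [q0 qn]] /andP[/and3P[_ _ p_ok] /and3P[_ _ q_ok]].
rewrite /profile_of !ffunE.
by have [-> ->] := chain_at_ends p_ok; have [-> ->] := chain_at_ends q_ok.
Qed.

Lemma of_profile_admissible w : profile_ok w -> admissible (of_profile w).
Proof.
case: w => [[[u v] [p0 pn]] [q0 qn]] /andP[/and3P[up pv p_ok] /and3P[uq qv q_ok]].
split=> [x | i j ij]; rewrite !ffunE; last by rewrite !chain_at_rel.
have uv := kind_le_trans up pv.
by case: x => [||i|i]; rewrite ?kind_le_chain_atl ?kind_le_chain_atr ?kind_le_refl.
Qed.

End Profiles.
Arguments profile_ok {n}.

Section Counting.
Variable n : nat.
Implicit Types (x y u v : jel n) (uv : jel n * jel n).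

Lemma jel_decodeK : cancel (@jel_decode n) (@jel_code n).
Proof. by case=> [[[[] i]|]|]. Qed.

Lemma sum_jel (F : jel n -> nat) :
  \sum_(x : jel n) F x =
  F JTop + F JBot + \sum_(i < n.+1) F (JF i) + \sum_(i < n.+1) F (JT i).
Proof.
rewrite (reindex (@jel_decode n)); last first.
  by exists (@jel_code n) => x _; [exact: jel_decodeK | exact: jel_codeK].
by rewrite !sum_option sum_pair big_bool /=; lia.
Qed.

Lemma chain_rel_count x :
  \sum_(y : jel n) chain_rel 0 n x y = if x is (JF i | JT i) then n.+1 - i else 1.
Proof.
rewrite sum_jel; case: x => [||i|i] /=; rewrite !big1_eq ?addn0 ?add0n // -(sum_ord_geq _ i);
  apply: eq_bigr => j _; move: (ltn_ord i) (ltn_ord j); lia.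
Qed.

Definition chain_count := \sum_(i < n.+1) (n.+1 - i).

Definition chain_choices uv := \sum_(p : jel n * jel n) chain_ok uv p.

Lemma chain_choicesE u v : chain_choices (u, v) =
  (kind_le u JTop && kind_le JTop v) + (kind_le u JBot && kind_le JBot v) +
  ((kind_le u (JF ord0) && kind_le (JF ord0) v) +
   (kind_le u (JT ord0) && kind_le (JT ord0) v)) * chain_count.
Proof.
rewrite /chain_choices sum_pair.
under eq_bigr => x _.
  rewrite (eq_bigr (fun y => (kind_le u x && kind_le x v) * chain_rel 0 n x y)) => [|y _];
    last by rewrite mulnb -andbA.
  rewrite -big_distrr chain_rel_count.
  over.
rewrite sum_jel /chain_count mulnDl !big_distrr.
by case: u v => [||?|?] [||?|?] /=; rewrite !addnA.
Qed.

Lemma card_profile_ok : #|@profile_ok n| = \sum_(uv : jel n * jel n) chain_choices uv ^ 2.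
Proof.
rewrite -sum1_card big_mkcond /= sum_pair sum_pair; apply: eq_bigr => uv _.
rewrite -mulnn big_distrlr; apply: eq_bigr => p _; apply: eq_bigr => q _.
by rewrite unfold_in /profile_ok /=; case: (chain_ok uv p); case: (chain_ok uv q).
Qed.

Lemma double_card_profile_ok : 2 * #|@profile_ok n| =
  n ^ 6 + 10 * n ^ 5 + 42 * n ^ 4 + 102 * n ^ 3 + 157 * n ^ 2 + 148 * n + 72.
Proof.
rewrite card_profile_ok sum_pair.
under eq_bigr => u _ do under eq_bigr => v _ do rewrite chain_choicesE.
under eq_bigr => u _ do rewrite sum_jel.
rewrite sum_jel /= !sum_nat_const !card_ord.
have := sum_ord_subn n.+1; rewrite -/chain_count; move: chain_count => m hm.
(* Only [2 * m] has a closed form, so first write everything in terms of it. *)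
transitivity (4 + 2 * (2 * m + 2) ^ 2 + 2 * n.+1 * (2 * m + 2) ^ 2 + n.+1 ^ 2 * (2 * m) ^ 2);
  first by lia.
by rewrite hm; lia.
Qed.

End Counting.

Unset Implicit Arguments.

Theorem theorem6p3 (n : nat) : (1 <= n)%N ->
  exists s : seq {ffun jel n -> jel n},
    [/\ uniq s,
        (forall f, f \in s <-> free1 f) &
        (2 * size s = n ^ 6 + 10 * n ^ 5 + 42 * n ^ 4 + 102 * n ^ 3
                      + 157 * n ^ 2 + 148 * n + 72)%N].
Proof.
move=> _; exists (map (@of_profile n) (enum profile_ok)); split.
- rewrite map_inj_in_uniq ?enum_uniq // => w1 w2; rewrite !mem_enum => ok1 ok2 eq12.
  by rewrite -(profile_of_profile ok1) eq12 profile_of_profile.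
- move=> f; rewrite free1_admissible; split.
  + by case/mapP=> w; rewrite mem_enum => /of_profile_admissible adm_w ->.
  + by case/admissible_profile=> ok <-; apply: map_f; rewrite mem_enum.
- by rewrite size_map -cardE double_card_profile_ok.
Qed.
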